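(* Let $(\mathcal S,\mathcal A,P,R,d_0)$ be a finite episodic MDP with horizon $T$ and $\pi_\theta$ a parameterized policy satisfying the score bound described in the context. Then there exists a finite constant $L_d$ such that for all $s\in\mathcal S$ (and all $\theta$), $$\Big\|\frac{\partial}{\partial\theta}\sum_{t=1}^{T-1}\Pr(S_t=s\mid\pi=\pi_\theta)\Big\|\le L_d.$$
   Context: Setting: $\mathcal S$ is a finite set of states, $\mathcal A$ a finite set of actions, $P(s'\mid s,a)$ a transition function, $d_0$ an initial state distribution. An episode runs as follows: $S_0\sim d_0$; at each time $t$, $A_t\sim\pi_\theta(\cdot\mid S_t)$, $S_{t+1}\sim P(\cdot\mid S_t,A_t)$; the horizon is $T$. The policy $\pi_\theta(a\mid s)$ is positive and differentiable in $\theta\in\mathbb R^n$, and there is a constant $L_\pi$ such that for all $\theta$, $s\in\mathcal S$, $a\in\mathcal A$: $\big\|\frac{\partial}{\partial\theta}\ln\pi_\theta(a\mid s)\big\|\le L_\pi$. *)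

From HB Require Import structures.
From mathcomp Require Import all_boot all_order all_algebra.
From mathcomp Require Import all_classical all_reals all_analysis.
Set Implicit Arguments. Unset Strict Implicit. Unset Printing Implicit Defensive.
Import Order.TTheory GRing.Theory Num.Theory.
Import numFieldNormedType.Exports.
Local Open Scope ring_scope.

Definition grad (R : realType) (n : nat) (f : 'rV[R]_n -> R) (th : 'rV[R]_n)
  : 'rV[R]_n :=
  \row_(i < n) derive f th (delta_mx 0 i).

Definition l2norm (R : realType) (n : nat) (v : 'rV[R]_n) : R :=
  Num.sqrt (\sum_(i < n) (v 0 i) ^+ 2).

(* Marginal state distribution Pr(S_t = s | pi) of the episode
   S_0 ~ d0, A_t ~ pi(.|S_t), S_{t+1} ~ P(.|S_t,A_t). *)
Fixpoint state_dist (R : realType) (S A : finType) (P : S -> A -> S -> R)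
  (d0 : S -> R) (pol : S -> A -> R) (t : nat) (s' : S) : R :=
  match t with
  | 0%N => d0 s'
  | t.+1 => \sum_(s : S) \sum_(a : A)
             state_dist P d0 pol t s * pol s a * P s a s'
  end.

From HB Require Import structures.
From mathcomp Require Import all_boot all_order all_algebra.
From mathcomp Require Import all_classical all_reals all_analysis.
Import Order.TTheory GRing.Theory Num.Theory.
Import numFieldNormedType.Exports.
Local Open Scope ring_scope.

(* Write d_t for the law of S_t under pi_th.  Differentiating the forward
   recursion d_(t+1)(s') = sum_(s,a) d_t(s) pi(a|s) P(s'|s,a) along a
   coordinate direction and summing absolute values over s' uses up the
   stochasticity of P and then of pi, so
     sum_s' |D d_(t+1)(s')| <= sum_s |D d_t(s)| + sum_s d_t(s) sum_a |D pi(a|s)|.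
   Since D pi = pi * D (ln pi), the score bound gives |D pi| <= L_pi pi, and as
   d_t is a probability distribution the last term is at most L_pi.  Hence
   sum_s |D d_t(s)| <= t L_pi, each partial derivative of sum_(t<T) d_t(s) is at
   most sum_(1<=t<T) t L_pi, and the gradient norm at most sqrt n times that. *)

Lemma ler_sum_term {R : numDomainType} {I : finType} (F : I -> R) i :
  (forall j, 0 <= F j) -> F i <= \sum_j F j.
Proof. by move=> F_ge0; rewrite (bigD1 i) //= lerDl sumr_ge0. Qed.

Lemma is_derive_sum_seq {R : numFieldType} {V W : normedModType R} {I : Type}
    (r : seq I) (p : pred I) (h : I -> V -> W) (dh : I -> W) x v :
  (forall i, p i -> is_derive x v (h i) (dh i)) ->
  is_derive x v (\sum_(i <- r | p i) h i) (\sum_(i <- r | p i) dh i).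
Proof.
move=> hP; elim/big_ind2 : _ => //; first exact: is_derive_cst.
by move=> *; exact: is_deriveD.
Qed.

Section ScoreBound.
Context {R : realType} {V : normedModType R}.

Lemma derive_ln_comp (f : V -> R) x v :
  differentiable f x -> 0 < f x ->
  'D_v (fun y => ln (f y)) x = 'D_v f x / f x.
Proof.
move=> df fx_gt0.
have dln : differentiable (@ln R) (f x).
  by apply/derivable1_diffP; case: (is_derive1_ln fx_gt0).
rewrite (deriveE _ (differentiable_comp df dln)) diff_comp // /=.
rewrite diff1E // derive1E.
have [_ ->] := is_derive1_ln fx_gt0.
by rewrite deriveE.
Qed.

Lemma norm_derive_le_score (f : V -> R) x v L :
  differentiable f x -> 0 < f x -> `|'D_v (fun y => ln (f y)) x| <= L ->
  `|'D_v f x| <= f x * L.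
Proof.
move=> df fx_gt0; rewrite derive_ln_comp // normrM normfV (gtr0_norm fx_gt0).
by rewrite ler_pdivrMr // mulrC.
Qed.

End ScoreBound.

Section L2Norm.
Context {R : realType} {n : nat}.

Lemma coord_le_l2norm (w : 'rV[R]_n) i : `|w 0 i| <= l2norm w.
Proof.
rewrite /l2norm -sqrtr_sqr ler_wsqrtr //.
by apply: ler_sum_term => j; exact: sqr_ge0.
Qed.

Lemma l2norm_le (w : 'rV[R]_n) K :
  (forall i, `|w 0 i| <= K) -> l2norm w <= Num.sqrt n%:R * K.
Proof.
case: n w => [|m] w wK; first by rewrite /l2norm big_ord0 sqrtr0 mul0r.
have K_ge0 : 0 <= K := le_trans (normr_ge0 _) (wK ord0).
apply: (@le_trans _ _ (Num.sqrt (\sum_(i < m.+1) K ^+ 2))).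
  rewrite ler_wsqrtr // ler_sum // => i _.
  by rewrite -real_normK ?num_real // lerXn2r ?inE.
rewrite sumr_const card_ord -[K ^+ 2 *+ _]mulr_natl sqrtrM // sqrtr_sqr.
by rewrite ger0_norm.
Qed.

End L2Norm.

Section StateDistribution.
Context {R : realType} {S A : finType} {P : S -> A -> S -> R} {d0 : S -> R}.
Hypothesis P_ge0 : forall s a s', 0 <= P s a s'.
Hypothesis P_sum1 : forall s a, \sum_s' P s a s' = 1.
Hypothesis d0_ge0 : forall s, 0 <= d0 s.

Lemma state_dist_ge0 (pol : S -> A -> R) t s :
  (forall s a, 0 <= pol s a) -> 0 <= state_dist P d0 pol t s.
Proof.
move=> pol_ge0; elim: t s => [|t IHt] s //=.
by do 2![apply: sumr_ge0 => ? _]; rewrite !mulr_ge0.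
Qed.

Lemma sum_state_dist (pol : S -> A -> R) t :
  (forall s, \sum_a pol s a = 1) ->
  \sum_s state_dist P d0 pol t s = \sum_s d0 s.
Proof.
move=> pol_sum1; elim: t => [|t IHt] //=; rewrite -IHt exchange_big /=.
apply: eq_bigr => s _; rewrite exchange_big /=.
under eq_bigr => a _ do rewrite -mulr_sumr P_sum1 mulr1.
by rewrite -mulr_sumr pol_sum1 mulr1.
Qed.

Context {n : nat} {pol : 'rV[R]_n -> S -> A -> R} {th v : 'rV[R]_n}.
Hypothesis pol_derivable : forall s a, derivable (fun th => pol th s a) th v.

Lemma is_derive_state_distS t s' :
  (forall s, derivable (fun th => state_dist P d0 (pol th) t s) th v) ->
  is_derive th v (fun th => state_dist P d0 (pol th) t.+1 s')
    (\sum_s \sum_a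
       ('D_v (fun th => state_dist P d0 (pol th) t s) th * pol th s a
        + state_dist P d0 (pol th) t s * 'D_v (fun th => pol th s a) th)
       * P s a s').
Proof.
move=> dist_derivable.
have -> : (fun th => state_dist P d0 (pol th) t.+1 s') = \sum_s \sum_a
    (fun th => state_dist P d0 (pol th) t s * pol th s a * P s a s').
  by rewrite fct_sumE; apply/funext => y; apply: eq_bigr => s _; rewrite fct_sumE.
apply: is_derive_sum_seq => s _; apply: is_derive_sum_seq => a _.
have h := is_deriveM (is_deriveM (derivableP (dist_derivable s))
  (derivableP (pol_derivable s a))) (is_derive_cst (P s a s') th v).
apply: is_derive_eq h _.
by rewrite /= scaler0 add0r /GRing.scale /= mulrC addrC [pol th s a * _]mulrC.
Qed.

Lemma derivable_state_dist t s :
  derivable (fun th => state_dist P d0 (pol th) t s) th v.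
Proof.
elim: t s => [|t IHt] s; first exact: derivable_cst.
by case: (is_derive_state_distS t s IHt).
Qed.

Context {L : R}.
Hypothesis pol_ge0 : forall s a, 0 <= pol th s a.
Hypothesis pol_sum1 : forall s, \sum_a pol th s a = 1.
Hypothesis d0_sum1 : \sum_s d0 s = 1.
Hypothesis pol_derive_le : forall s a,
  `|'D_v (fun th => pol th s a) th| <= pol th s a * L.

Lemma sum_norm_derive_state_distS t :
  \sum_s `|'D_v (fun th => state_dist P d0 (pol th) t.+1 s) th|
    <= \sum_s `|'D_v (fun th => state_dist P d0 (pol th) t s) th| + L.
Proof.
set D := fun s => 'D_v (fun th => state_dist P d0 (pol th) t s) th.
set d := fun s => state_dist P d0 (pol th) t s.
have d_ge0 s : 0 <= d s by exact: state_dist_ge0.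
apply: (@le_trans _ _ (\sum_s' \sum_s \sum_a
    (`|D s| * pol th s a + d s * (pol th s a * L)) * P s a s')).
  apply: ler_sum => s' _.
  have [_ ->] := is_derive_state_distS t s' (derivable_state_dist t).
  apply: (le_trans (ler_norm_sum _ _ _)); apply: ler_sum => s _.
  apply: (le_trans (ler_norm_sum _ _ _)); apply: ler_sum => a _.
  rewrite normrM (ger0_norm (P_ge0 _ _ _)) ler_wpM2r //.
  apply: (le_trans (ler_normD _ _)); rewrite !normrM (ger0_norm (pol_ge0 _ _)).
  by rewrite (ger0_norm (d_ge0 _)) lerD2l ler_wpM2l.
have mass : \sum_s d s = 1 by rewrite sum_state_dist.
rewrite exchange_big /= (eq_bigr (fun s => `|D s| + d s * L)) => [|s _].
  by rewrite big_split /= -mulr_suml mass mul1r.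
rewrite exchange_big /=.
under eq_bigr => a _ do rewrite -mulr_sumr P_sum1 mulr1.
by rewrite big_split /= -!mulr_sumr -mulr_suml pol_sum1 mulr1 mul1r.
Qed.

Lemma sum_norm_derive_state_dist t :
  \sum_s `|'D_v (fun th => state_dist P d0 (pol th) t s) th| <= t%:R * L.
Proof.
elim: t => [|t IHt].
  by rewrite mul0r big1 // => s _; rewrite /= derive_cst normr0.
apply: (le_trans (sum_norm_derive_state_distS t)).
by rewrite -nat1r mulrDl mul1r addrC lerD2l.
Qed.

End StateDistribution.

Theorem corollary2 (R : realType) (S A : finType)
  (P : S -> A -> S -> R) (d0 : S -> R) (T n : nat)
  (pi : 'rV[R]_n -> S -> A -> R) (L_pi : R)
  (HP0 : forall s a s', 0 <= P s a s')
  (HP1 : forall s a, \sum_(s' : S) P s a s' = 1)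
  (Hd00 : forall s, 0 <= d0 s)
  (Hd01 : \sum_(s : S) d0 s = 1)
  (Hpi_pos : forall th s a, 0 < pi th s a)
  (Hpi_sum : forall th s, \sum_(a : A) pi th s a = 1)
  (Hpi_diff : forall th s a, differentiable (fun th' => pi th' s a) th)
  (Hscore : forall th s a,
     l2norm (grad (fun th' => ln (pi th' s a)) th) <= L_pi) :
  exists L_d : R, forall (s : S) (th : 'rV[R]_n),
    l2norm (grad (fun th' => \sum_(1 <= t < T) state_dist P d0 (pi th') t s) th)
      <= L_d.
Proof.
exists (Num.sqrt n%:R * \sum_(1 <= t < T) t%:R * L_pi) => s th.
apply: l2norm_le => i; rewrite /grad mxE; set v := delta_mx 0 i.
have pi_derivable s' a : derivable (fun th => pi th s' a) th v.
  exact: diff_derivable.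
have pi_derive_le s' a : `|'D_v (fun th => pi th s' a) th| <= pi th s' a * L_pi.
  apply: norm_derive_le_score => //; apply: le_trans (Hscore th s' a).
  by have := coord_le_l2norm (grad (fun th => ln (pi th s' a)) th) i; rewrite mxE.
have sum_derive : is_derive th v
    (\sum_(1 <= t < T) (fun th => state_dist P d0 (pi th) t s))
    (\sum_(1 <= t < T) 'D_v (fun th => state_dist P d0 (pi th) t s) th).
  by apply: is_derive_sum_seq => t _; apply/derivableP/derivable_state_dist.
rewrite -fct_sumE derive_val.
apply: (le_trans (ler_norm_sum _ _ _)); apply: ler_sum => t _.
have pi_ge0 s' a : 0 <= pi th s' a := ltW (Hpi_pos th s' a).
apply: le_trans _ (sum_norm_derive_state_dist HP0 HP1 Hd00 pi_derivable pi_ge0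
  (Hpi_sum th) Hd01 pi_derive_le t).
by apply: ler_sum_term => s'.
Qed.
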